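(* Let $V:\mathcal{H}\otimes\mathbb{C}^d\to\mathcal{H}$ be a row partial isometry with a model triple $(\gamma,\mathcal{J}_\infty,\mathcal{J}_0)$. The linear map $\mathcal{U}^\gamma:\mathcal{H}\to\mathcal{H}^\gamma$, $h\mapsto h^\gamma$, is a linear isomorphism (i.e. injective) if and only if $V$ is completely non-coisometric. In that case, $\mathcal{H}^\gamma$ with the inner product $\langle h^\gamma,g^\gamma\rangle:=\langle h,g\rangle_\mathcal{H}$ is a Hilbert space and $\mathcal{U}^\gamma$ is unitary.
   Context: A row partial isometry is $V=(V_1,\dots,V_d):\mathcal{H}\otimes\mathbb{C}^d\to\mathcal{H}$ with $V^*V$ a projection. CNC: no nonzero closed subspace $\mathcal{M}\subseteq\mathcal{H}$ invariant under all $V_j^*$ with $V^*|_\mathcal{M}$ isometric. $\mathbb{B}^d_n$: $d$-tuples of $n\times n$ complex matrices $Z$ with $\|[Z_1\cdots Z_d]\|<1$; $0=(0,\dots,0)\in\mathbb{B}^d_1$. For $Z\in\mathbb{B}^d_n$, $ZV^*=\sum_jV_j^*\otimes Z_j$ on $\mathcal{H}\otimes\mathbb{C}^n$, and the $Z$-restricted range space is $\mathcal{R}(V-Z)=(I-ZV^* )(\mathrm{Ran}V\otimes\mathbb{C}^n)\subseteq\mathcal{H}\otimes\mathbb{C}^n$. Model triple: Hilbert spaces $\mathcal{J}_\infty,\mathcal{J}_0$ and a map $\gamma$ assigning to $\infty$ an isometry $\gamma(\infty):\mathcal{J}_\infty\to\mathcal{H}\otimes\mathbb{C}^d$ with range $\mathrm{Ker}\,V$,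 and to each $Z\in\mathbb{B}^d_n$ ($n\in\mathbb{N}$) a bounded linear bijection $\gamma(Z):\mathcal{J}_0\otimes\mathbb{C}^n\to\mathcal{R}(V-Z)^\perp$, such that $\gamma(0)$ is an isometry onto $(\mathrm{Ran}V)^\perp$. For $h\in\mathcal{H}$, $h^\gamma$ is the function on $\mathbb{B}^d_{\mathbb{N}}=\bigsqcup_n\mathbb{B}^d_n$ with $h^\gamma(W):\mathbb{C}^n\to\mathcal{J}_0\otimes\mathbb{C}^n$, $h^\gamma(W)v:=\gamma(W)^*(h\otimes v)$ for $W\in\mathbb{B}^d_n$; $\mathcal{H}^\gamma=\{h^\gamma:h\in\mathcal{H}\}$. *)

From mathcomp Require Import all_boot all_order all_algebra.
From mathcomp Require Import reals complex.
Import GRing.Theory Num.Theory.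
Set Implicit Arguments. Unset Strict Implicit. Unset Printing Implicit Defensive.
Local Open Scope ring_scope.
Local Open Scope complex_scope.

Section InnerProductSpaces.
Variable R : realType.
Local Notation C := (R[i]).

Section OneSpace.
Variable T : lmodType C.
Variable ip : T -> T -> C.

Definition is_inner_product : Prop :=
  [/\ (forall (a : C) (x y z : T), ip (a *: x + y) z = a * ip x z + ip y z),
      (forall x y : T, ip y x = (ip x y)^*),
      (forall x : T, 0 <= ip x x) &
      (forall x : T, ip x x = 0 -> x = 0)].

(* squared norm ||x||^2 (a nonnegative real number, seen in C) *)
Definition nsq (x : T) : C := ip x x.

Definition cauchy_seq (u : nat -> T) : Prop :=
  forall eps : C, 0 < eps -> exists N : nat,
    forall m n : nat, (N <= m)%N -> (N <= n)%N -> nsq (u m - u n) < eps.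

Definition converges_to (u : nat -> T) (x : T) : Prop :=
  forall eps : C, 0 < eps -> exists N : nat,
    forall n : nat, (N <= n)%N -> nsq (u n - x) < eps.

Definition is_hilbert : Prop :=
  is_inner_product /\ forall u, cauchy_seq u -> exists x, converges_to u x.

Definition lin_subspace (S : T -> Prop) : Prop :=
  S 0 /\ forall (a : C) (x y : T), S x -> S y -> S (a *: x + y).

Definition closed_set (S : T -> Prop) : Prop :=
  forall (u : nat -> T) (x : T), (forall n, S (u n)) -> converges_to u x -> S x.

Definition orth (S : T -> Prop) : T -> Prop :=
  fun y => forall x, S x -> ip x y = 0.

End OneSpace.

Section Operators.
Variables (T1 T2 : lmodType C) (ip1 : T1 -> T1 -> C) (ip2 : T2 -> T2 -> C).

Definition linear_map (f : T1 -> T2) : Prop :=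
  forall (a : C) (x y : T1), f (a *: x + y) = a *: f x + f y.

Definition bounded_op (f : T1 -> T2) : Prop :=
  linear_map f /\ exists M : C, forall x, nsq ip2 (f x) <= M * nsq ip1 x.

Definition is_adjoint (f : T1 -> T2) (g : T2 -> T1) : Prop :=
  forall x y, ip2 (f x) y = ip1 x (g y).

Definition isometry (f : T1 -> T2) : Prop :=
  forall x y, ip2 (f x) (f y) = ip1 x y.

End Operators.

(* H (x) C^n is modelled as {ffun 'I_n -> H} with the sum inner product *)
Definition tens_ip (T : lmodType C) (ip : T -> T -> C) (n : nat)
  (x y : {ffun 'I_n -> T}) : C := \sum_(i < n) ip (x i) (y i).

Definition tens (T : lmodType C) (n : nat) (h : T) (v : 'cV[C]_n) : {ffun 'I_n -> T} :=
  [ffun i => v i 0 *: h].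

Definition vnsq (n : nat) (v : 'cV[C]_n) : C := \sum_(i < n) `|v i 0| ^+ 2.

(* Z in B^d_n : the row [Z_1 ... Z_d] : C^n (x) C^d -> C^n has operator norm < 1 *)
Definition in_ncball (d n : nat) (Z : 'I_d -> 'M[C]_n) : Prop :=
  exists c : C, 0 <= c < 1 /\
    forall x : 'I_d -> 'cV[C]_n,
      vnsq (\sum_(j < d) Z j *m x j) <= c ^+ 2 * \sum_(j < d) vnsq (x j).

Section RowOperator.
Variables (d : nat) (H : lmodType C) (ipH : H -> H -> C).
Variables (V : {ffun 'I_d -> H} -> H) (Vadj : H -> {ffun 'I_d -> H}).
(* V = (V_1,...,V_d), Vadj = V^adj, so V_j^adj h = Vadj h j *)

Definition row_partial_isometry : Prop :=
  [/\ bounded_op (tens_ip ipH (n:=d)) ipH V,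
      is_adjoint (tens_ip ipH (n:=d)) ipH V Vadj,
      (forall x, Vadj (V (Vadj (V x))) = Vadj (V x)) &
      (forall x y, tens_ip ipH (Vadj (V x)) y = tens_ip ipH x (Vadj (V y)))].

Definition CNC : Prop :=
  forall M : H -> Prop,
    lin_subspace M -> closed_set ipH M ->
    (forall (j : 'I_d) h, M h -> M (Vadj h j)) ->
    (forall h g, M h -> M g -> tens_ip ipH (Vadj h) (Vadj g) = ipH h g) ->
    forall h, M h -> h = 0.

(* Z V^adj = sum_j V_j^adj (x) Z_j acting on H (x) C^n *)
Definition ZVstar (n : nat) (Z : 'I_d -> 'M[C]_n) (x : {ffun 'I_n -> H})
  : {ffun 'I_n -> H} :=
  [ffun i => \sum_(j < d) \sum_(k < n) Z j i k *: Vadj (x k) j].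

Definition ranV_tens (n : nat) (x : {ffun 'I_n -> H}) : Prop :=
  forall i, exists y, x i = V y.

(* R(V - Z) = (I - Z Vadj)(Ran V (x) C^n) *)
Definition restricted_range (n : nat) (Z : 'I_d -> 'M[C]_n) : {ffun 'I_n -> H} -> Prop :=
  fun y => exists x, ranV_tens x /\ y = x - ZVstar Z x.

Section Model.
Variables (Jinf J0 : lmodType C) (ipinf : Jinf -> Jinf -> C) (ip0 : J0 -> J0 -> C).
Variable ginf : Jinf -> {ffun 'I_d -> H}.
Variable g : forall n : nat, ('I_d -> 'M[C]_n) -> {ffun 'I_n -> J0} -> {ffun 'I_n -> H}.
Variable gadj : forall n : nat, ('I_d -> 'M[C]_n) -> {ffun 'I_n -> H} -> {ffun 'I_n -> J0}.

Definition model_triple : Prop :=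
  [/\ (is_hilbert ipinf /\ is_hilbert ip0),
      (linear_map ginf /\ isometry ipinf (tens_ip ipH (n:=d)) ginf),
      (forall y, (exists j, ginf j = y) <-> V y = 0),
      (forall (n : nat) (Z : 'I_d -> 'M[C]_n), (0 < n)%N -> in_ncball Z ->
         [/\ bounded_op (tens_ip ip0 (n:=n)) (tens_ip ipH (n:=n)) (g Z),
             is_adjoint (tens_ip ip0 (n:=n)) (tens_ip ipH (n:=n)) (g Z) (gadj Z),
             injective (g Z) &
             (forall y, (exists j, g Z j = y) <->
                        orth (tens_ip ipH (n:=n)) (restricted_range Z) y)]) &
      isometry (tens_ip ip0 (n:=1)) (tens_ip ipH (n:=1)) (g (fun _ => 0))].

Definition hgamma (h : H) (n : nat) (W : 'I_d -> 'M[C]_n) (v : 'cV[C]_n)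
  : {ffun 'I_n -> J0} := gadj W (tens h v).

Definition hgamma_eq (h k : H) : Prop :=
  forall (n : nat) (W : 'I_d -> 'M[C]_n), (0 < n)%N -> in_ncball W ->
    forall v, hgamma h W v = hgamma k W v.

Definition Ugamma_injective : Prop := forall h k, hgamma_eq h k -> h = k.

End Model.
End RowOperator.
End InnerProductSpaces.

From mathcomp Require Import all_boot all_order all_algebra.
From mathcomp Require Import reals complex.
From mathcomp Require Import ring lra.
Import Order.TTheory GRing.Theory Num.Theory.
Set Implicit Arguments. Unset Strict Implicit. Unset Printing Implicit Defensive.
Local Open Scope ring_scope.
Local Open Scope complex_scope.

(* Let M be the set of h such that h (x) v is orthogonal to R(V - W)^perp for all
   W in B^d_n and v in C^n.  Since gamma(W) maps onto R(V - W)^perp, h^gamma = k^gamma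
   exactly when h - k lies in M, so U^gamma is injective iff M = 0.

   If V is CNC then M = 0, since M is a closed subspace on which V^* is isometric
   (take W = 0, where R(V - 0) = Ran V) and which is invariant under every V_j^*:
   bordering W with a small multiple of the column v gives a row contraction W' of size
   n + 1 and a vector y' in R(V - W')^perp, built from y and V, for which
   <h (x) e_(n+1), y'> is a nonzero multiple of <V_j^* h (x) v, y>.

   Conversely, let N be a V^*-invariant subspace on which V^* is isometric, and let
   Z = W V^* act on N (x) C^n.  As V V^* is the identity on N, m - Z m lies in R(V - W)
   for m in N (x) C^n, so <m, y> = <Z^k m, y> for every y in R(V - W)^perp and every k.
   Since Z is a strict contraction on N (x) C^n, <m, y> = 0.  So N is contained in M,
   which is zero when U^gamma is injective. *)

(** * Inner products *)

Section InnerProduct.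
Variables (R : realType) (T : lmodType R[i]) (ip : T -> T -> R[i]).
Hypothesis ipP : is_inner_product ip.

Lemma ipC x y : ip y x = conjc (ip x y).
Proof. by case: ipP. Qed.

Lemma ip_ge0 x : 0 <= ip x x.
Proof. by case: ipP. Qed.

Lemma ip_eq0 x : ip x x = 0 -> x = 0.
Proof. by case: ipP => _ _ _; apply. Qed.

Lemma ipDl x y z : ip (x + y) z = ip x z + ip y z.
Proof. by case: ipP => ipl _ _ _; rewrite -{1}(scale1r x) ipl mul1r. Qed.

Lemma ip0l z : ip 0 z = 0.
Proof. by apply/(addrI (ip 0 z)); rewrite -ipDl !addr0. Qed.

Lemma ipZl a x z : ip (a *: x) z = a * ip x z.
Proof. by case: ipP => ipl _ _ _; rewrite -[a *: x]addr0 ipl ip0l addr0. Qed.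

Lemma ipNl x z : ip (- x) z = - ip x z.
Proof. by rewrite -scaleN1r ipZl mulN1r. Qed.

Lemma ipBl x y z : ip (x - y) z = ip x z - ip y z.
Proof. by rewrite ipDl ipNl. Qed.

Lemma ip0r z : ip z 0 = 0.
Proof. by rewrite ipC ip0l conjc0. Qed.

Lemma ipDr x y z : ip z (x + y) = ip z x + ip z y.
Proof. by rewrite ipC ipDl rmorphD /= -!ipC. Qed.

Lemma ipZr a x z : ip z (a *: x) = conjc a * ip z x.
Proof. by rewrite ipC ipZl rmorphM /= -ipC. Qed.

Lemma ipNr x z : ip z (- x) = - ip z x.
Proof. by rewrite ipC ipNl rmorphN /= -ipC. Qed.

Lemma ipBr x y z : ip z (x - y) = ip z x - ip z y.
Proof. by rewrite ipDr ipNr. Qed.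

Lemma ip_suml (I : Type) (r : seq I) (P : pred I) (F : I -> T) z :
  ip (\sum_(i <- r | P i) F i) z = \sum_(i <- r | P i) ip (F i) z.
Proof. by elim/big_rec2: _ => [|i a b _ <-]; rewrite ?ip0l ?ipDl. Qed.

Lemma ip_sumr (I : Type) (r : seq I) (P : pred I) (F : I -> T) z :
  ip z (\sum_(i <- r | P i) F i) = \sum_(i <- r | P i) ip z (F i).
Proof. by elim/big_rec2: _ => [|i a b _ <-]; rewrite ?ip0r ?ipDr. Qed.

Lemma ip_ext u w : (forall z, ip z u = ip z w) -> u = w.
Proof.
by move=> E; apply/eqP; rewrite -subr_eq0; apply/eqP/ip_eq0; rewrite ipBr E subrr.
Qed.

Lemma cauchy_schwarz x y : ip x y * conjc (ip x y) <= ip x x * ip y y.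
Proof.
have [/ip_eq0 ->|yy_neq0] := eqVneq (ip y y) 0; first by rewrite ip0r ip0l mul0r mulr0.
have yy_gt0 : 0 < ip y y by rewrite lt0r yy_neq0 ip_ge0.
set p := ip x y; set s := ip y y.
have conj_ps : conjc (p / s) = conjc p / s.
  by rewrite rmorphM /= conjc_inv (geC0_conj (ltW yy_gt0) : conjc s = s).
have residual : ip (x - (p / s) *: y) (x - (p / s) *: y) = ip x x - p * conjc p / s.
  by rewrite ipBl !ipBr !ipZl !ipZr -/s -/p (ipC x y) -/p conj_ps; field; rewrite gt_eqF.
have := ip_ge0 (x - (p / s) *: y).
by rewrite residual subr_ge0 ler_pdivrMr // mulrC.
Qed.

Lemma gram_form_ge0 (I : finType) (A : I -> I -> R[i]) :
  (forall x : I -> R[i], 0 <= \sum_p \sum_q A p q * (x q * conjc (x p))) ->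
  forall xi : I -> T, 0 <= \sum_p \sum_q A p q * ip (xi q) (xi p).
Proof.
move=> A_psd xi; move: {2}#|_| (leqnn #|[set p | xi p != 0]|) => m.
elim: m xi => [|m IH] xi supp.
  have xi0 p : xi p = 0.
    apply/eqP/negP => /negP xip; move: supp.
    by rewrite leqn0 cards_eq0 => /eqP/setP/(_ p); rewrite !inE xip.
  by rewrite big1 // => p _; rewrite big1 // => q _; rewrite xi0 ip0l mulr0.
have [k /= xik|/= xi0] := pickP (fun p => xi p != 0); last first.
  apply: IH; suff -> : [set p | xi p != 0] = set0 by rewrite cards0.
  by apply/setP => p; rewrite !inE xi0.
(* split off the component of every [xi q] along [xi k]: the remainders [eta q]
   vanish at [k], so the induction hypothesis applies to them *)
set s := ip (xi k) (xi k).
have s_neq0 : s != 0 by apply: contra xik => /eqP/ip_eq0 ->.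
pose al q := ip (xi q) (xi k) / s.
pose eta q := xi q - al q *: xi k.
have eta_orth q : ip (eta q) (xi k) = 0 by rewrite ipBl ipZl divfK // subrr.
have eta_supp : (#|[set p | eta p != 0%R]| <= m)%N.
  have sub : [set p | eta p != 0] \subset [set p | xi p != 0] :\ k.
    apply/subsetP => p; rewrite !inE; apply: contraR; rewrite negb_and !negbK.
    case/orP => /eqP => [-> | xip]; apply/eqP; rewrite /eta /al.
      by rewrite -/s divff // scale1r subrr.
    by rewrite xip ip0l mul0r scale0r subr0.
  apply: leq_trans (subset_leq_card sub) _.
  by move: supp; rewrite (cardsD1 k) inE xik.
have xi_split q : xi q = al q *: xi k + eta q by rewrite addrC subrK.
clearbody eta.
have ip_split p q : ip (xi q) (xi p) = al q * conjc (al p) * s + ip (eta q) (eta p).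
  rewrite {1}(xi_split q) {1}(xi_split p) ipDl !ipDr !ipZl !ipZr eta_orth.
  by rewrite (ipC (eta p)) eta_orth conjc0 -/s; ring.
have -> : \sum_p \sum_q A p q * ip (xi q) (xi p) =
    s * (\sum_p \sum_q A p q * (al q * conjc (al p))) +
    \sum_p \sum_q A p q * ip (eta q) (eta p).
  rewrite mulr_sumr -big_split /=; apply: eq_bigr => p _.
  by rewrite mulr_sumr -big_split /=; apply: eq_bigr => q _; rewrite ip_split; ring.
by rewrite addr_ge0 ?mulr_ge0 ?ip_ge0 ?IH.
Qed.

Lemma gram_form_expand (I J : finType) (w : J -> I -> R[i]) (a : R[i]) (xi : I -> T) :
  \sum_p \sum_q (a * (p == q)%:R - \sum_i w i q * conjc (w i p)) * ip (xi q) (xi p)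
  = a * \sum_p ip (xi p) (xi p)
    - \sum_i ip (\sum_q w i q *: xi q) (\sum_p w i p *: xi p).
Proof.
have -> : \sum_i ip (\sum_q w i q *: xi q) (\sum_p w i p *: xi p) =
    \sum_p \sum_q \sum_i w i q * conjc (w i p) * ip (xi q) (xi p).
  transitivity (\sum_i \sum_q \sum_p w i q * conjc (w i p) * ip (xi q) (xi p)).
    apply: eq_bigr => i _; rewrite ip_suml; apply: eq_bigr => q _.
    rewrite ipZl ip_sumr mulr_sumr; apply: eq_bigr => p _.
    by rewrite ipZr; ring.
  rewrite exchange_big /=; under eq_bigr do rewrite exchange_big /=.
  by rewrite exchange_big.
rewrite mulr_sumr -sumrB; apply: eq_bigr => p _.
under eq_bigr do rewrite mulrBl.
rewrite sumrB; congr (_ - _); last by apply: eq_bigr => q _; rewrite mulr_suml.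
rewrite (bigD1 p) //= eqxx mulr1 big1 ?addr0 // => q /negbTE qp.
by rewrite eq_sym qp mulr0 mul0r.
Qed.
End InnerProduct.

Lemma scalar_is_inner_product (R : realType) :
  is_inner_product (fun a b : R[i]^o => a * conjc b).
Proof.
split=> [a x y z|x y|x|x /eqP].
- by rewrite /= mulrDl mulrA.
- by rewrite rmorphM /= conjcK mulrC.
- exact: mulcJ_ge0.
- by rewrite mulf_eq0 conjc_eq0 orbb => /eqP.
Qed.

Lemma tens_ip_is_inner_product (R : realType) (T : lmodType R[i]) (ip : T -> T -> R[i])
  (n : nat) : is_inner_product ip -> is_inner_product (tens_ip ip (n:=n)).
Proof.
move=> ipP; split=> [a x y z|x y|x|x /eqP].
- rewrite /tens_ip mulr_sumr -big_split; apply: eq_bigr => i _.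
  by rewrite !ffunE ipDl // ipZl.
- by rewrite /tens_ip rmorph_sum; apply: eq_bigr => i _; apply: ipC.
- by apply: sumr_ge0 => i _; apply: ip_ge0.
- rewrite psumr_eq0 => [/allP x0|i _]; last exact: ip_ge0.
  apply/ffunP => i; rewrite ffunE; apply: (ip_eq0 ipP).
  by apply/eqP/x0; rewrite mem_index_enum.
Qed.

Lemma ip_annihilator_closed (R : realType) (T : lmodType R[i]) (ip : T -> T -> R[i])
  (Y : T) : is_inner_product ip -> closed_set ip (fun x => ip x Y = 0).
Proof.
move=> ipP u x u_perp u_cvg; set a := ip x Y.
suff : a * conjc a = 0 by move/eqP; rewrite mulf_eq0 conjc_eq0 orbb => /eqP.
apply/eqP; rewrite eq_le mulcJ_ge0 andbT; apply/ler_addgt0Pr => e e_gt0.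
have YY_ge0 : 0 <= ip Y Y by apply: ip_ge0.
have YY1_gt0 : 0 < ip Y Y + 1 by apply: le_lt_trans YY_ge0 _; rewrite ltrDl.
have [N uN_near] := u_cvg _ (divr_gt0 e_gt0 YY1_gt0).
have {uN_near} : nsq ip (x - u N) < e / (ip Y Y + 1).
  by rewrite /nsq -opprB !ipNl ?ipNr // opprK; apply: uN_near.
rewrite add0r (_ : a = ip (x - u N) Y); last by rewrite ipBl // u_perp subr0.
move=> /ltW uN_close; apply: le_trans (cauchy_schwarz ipP _ _) _.
apply: le_trans (ler_wpM2r YY_ge0 uN_close) _.
by rewrite -mulrA ger_pMr // mulrC ler_pdivrMr // mul1r lerDl ler01.
Qed.

Lemma ffunBE (I : finType) (M : zmodType) (f g : {ffun I -> M}) i :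
  (f - g) i = f i - g i.
Proof. by rewrite !ffunE. Qed.

Section LinearMap.
Variables (R : realType) (T1 T2 : lmodType R[i]) (f : T1 -> T2).
Hypothesis f_lin : linear_map f.

Lemma linear_map0 : f 0 = 0.
Proof.
have := f_lin 1 0 0; rewrite !scale1r addr0 => f00.
by apply/(addrI (f 0)); rewrite addr0 -f00.
Qed.

Lemma linear_mapD x y : f (x + y) = f x + f y.
Proof. by rewrite -[x in LHS]scale1r f_lin scale1r. Qed.

Lemma linear_mapZ a x : f (a *: x) = a *: f x.
Proof. by rewrite -[a *: x]addr0 f_lin linear_map0 addr0. Qed.

Lemma linear_mapB x y : f (x - y) = f x - f y.
Proof. by rewrite linear_mapD -scaleN1r linear_mapZ scaleN1r. Qed.
End LinearMap.

Section LinSubspace.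
Variables (R : realType) (T : lmodType R[i]) (M : T -> Prop).
Hypothesis M_lin : lin_subspace M.

Lemma lin_subspace0 : M 0.
Proof. by case: M_lin. Qed.

Lemma lin_subspaceD x y : M x -> M y -> M (x + y).
Proof. by case: M_lin => _ M_comb Mx My; rewrite -[x]scale1r; apply: M_comb. Qed.

Lemma lin_subspaceZ a x : M x -> M (a *: x).
Proof. by case: M_lin => M0 M_comb Mx; rewrite -[a *: x]addr0; apply: M_comb. Qed.

Lemma lin_subspace_sum (I : Type) (r : seq I) (P : pred I) (F : I -> T) :
  (forall i, P i -> M (F i)) -> M (\sum_(i <- r | P i) F i).
Proof.
by move=> MF; apply: big_ind => //; [exact: lin_subspace0 | exact: lin_subspaceD].
Qed.
End LinSubspace.

(** * Row contractions *)

Section EuclideanNorm.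
Variable R : realType.

Definition row_norm_le d n (W : 'I_d -> 'M[R[i]]_n) (c : R[i]) : Prop :=
  forall x : 'I_d -> 'cV[R[i]]_n,
    vnsq (\sum_(j < d) W j *m x j) <= c ^+ 2 * \sum_(j < d) vnsq (x j).

Lemma vnsq_ge0 n (u : 'cV[R[i]]_n) : 0 <= vnsq u.
Proof. by apply: sumr_ge0 => i _; rewrite exprn_ge0. Qed.

Lemma vnsq0 n : vnsq (0 : 'cV[R[i]]_n) = 0.
Proof. by rewrite /vnsq big1 // => i _; rewrite mxE normr0 expr0n. Qed.

Lemma vnsq_col_mx m1 m2 (a : 'cV[R[i]]_m1) (b : 'cV[R[i]]_m2) :
  vnsq (col_mx a b) = vnsq a + vnsq b.
Proof.
by rewrite /vnsq big_split_ord /=; congr (_ + _); apply: eq_bigr => i _;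
  rewrite ?col_mxEu ?col_mxEd.
Qed.

Lemma vnsqZ n (s : R[i]) (u : 'cV[R[i]]_n) : vnsq (s *: u) = `|s| ^+ 2 * vnsq u.
Proof. by rewrite /vnsq mulr_sumr; apply: eq_bigr => i _; rewrite mxE normrM exprMn. Qed.

Lemma vnsqD_weighted n (a b : 'cV[R[i]]_n) (l : R[i]) : 0 <= l ->
  l * (1 - l) * vnsq (a + b) <= (1 - l) * vnsq a + l * vnsq b.
Proof.
move=> l_ge0; rewrite /vnsq !mulr_sumr -big_split /=.
apply: ler_sum => i _; rewrite mxE -subr_ge0 !sqr_normc.
have conj_l : conjc l = l by exact: geC0_conj.
set u := a i 0; set w := b i 0.
have -> : (1 - l) * (u * conjc u) + l * (w * conjc w)
            - l * (1 - l) * ((u + w) * conjc (u + w))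
          = ((1 - l) * u - l * w) * conjc ((1 - l) * u - l * w).
  by rewrite !(rmorphB, rmorphM, rmorphD, rmorph1) /= conj_l; ring.
exact: mulcJ_ge0.
Qed.
End EuclideanNorm.

Lemma row_contraction_ampliation (R : realType) (T : lmodType R[i])
  (ip : T -> T -> R[i]) (d n : nat) (W : 'I_d -> 'M[R[i]]_n) (c : R[i]) :
  is_inner_product ip ->
  row_norm_le W c ->
  forall xi : 'I_d -> 'I_n -> T,
  \sum_(i < n) ip (\sum_(j < d) \sum_(k < n) W j i k *: xi j k)
                  (\sum_(j < d) \sum_(k < n) W j i k *: xi j k)
   <= c ^+ 2 * \sum_(j < d) \sum_(k < n) ip (xi j k) (xi j k).
Proof.
move=> ipP W_contr xi.
pose w (i : 'I_n) (p : 'I_d * 'I_n) := W p.1 i p.2.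
have W_sum (e : 'I_d -> 'I_n -> T) i :
    \sum_(j < d) \sum_(k < n) W j i k *: e j k = \sum_q w i q *: e q.1 q.2.
  by rewrite pair_bigA /=; apply: eq_bigr => -[j k].
pose A p q := c ^+ 2 * (p == q)%:R - \sum_i w i q * conjc (w i p).
(* [A] is positive semidefinite: this is the contraction hypothesis on [C^n] *)
have A_psd (x : 'I_d * 'I_n -> R[i]) : 0 <= \sum_p \sum_q A p q * (x q * conjc (x p)).
  have := gram_form_expand (scalar_is_inner_product R) w (c ^+ 2) x.
  rewrite /= => ->; rewrite subr_ge0.
  have := W_contr (fun j => \col_k x (j, k)); rewrite /vnsq.
  have -> : \sum_(j < d) \sum_(i < n) `|(\col_k x (j, k)) i 0| ^+ 2 =
            \sum_p x p * conjc (x p).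
    by rewrite pair_bigA /=; apply: eq_bigr => -[j k] _; rewrite mxE sqr_normc.
  suff -> : \sum_(i < n) `|(\sum_(j < d) W j *m \col_k x (j, k)) i 0| ^+ 2 =
      \sum_i (\sum_q w i q * x q) * conjc (\sum_p w i p * x p) by [].
  apply: eq_bigr => i _; rewrite sqr_normc summxE.
  under eq_bigr => j _ do (rewrite mxE; under eq_bigr => k _ do rewrite mxE).
  by rewrite pair_bigA; congr (_ * conjc _); apply: eq_bigr => -[j k].
under eq_bigr do rewrite !W_sum.
rewrite pair_bigA -subr_ge0 -(gram_form_expand ipP w _ (fun p => xi p.1 p.2)).
exact: gram_form_ge0.
Qed.

Lemma border_bound (F : numFieldType) (c Q X S s K del N : F) :
  0 <= c -> c <= Q -> 0 < Q -> Q < 1 -> 0 <= X -> 0 <= K -> 0 <= s -> s <= S ->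
  0 <= del -> del <= 1 -> del * (1 + K) = Q * (1 - Q) ->
  Q * (1 - Q) * N <= (1 - Q) * (c ^+ 2 * X) + Q * (del ^+ 2 * s * K) ->
  N <= Q * (X + S).
Proof.
move=> c_ge0 cQ Q_gt0 Q_lt1 X_ge0 K_ge0 s_ge0 sS del_ge0 del_le1 del_def N_le.
have Q1_gt0 : 0 < 1 - Q by rewrite subr_gt0.
rewrite -(ler_pM2l (mulr_gt0 Q_gt0 Q1_gt0)); apply: le_trans N_le _.
have cX : c ^+ 2 * X <= Q ^+ 2 * X by rewrite ler_wpM2r // lerXn2r ?nnegrE // ltW.
have delK : del * K <= Q * (1 - Q) by rewrite -del_def ler_wpM2l // lerDr.
have sK : del ^+ 2 * s * K <= Q * (1 - Q) * S.
  rewrite (_ : _ * K = del * (del * K) * s); last by rewrite expr2; ring.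
  rewrite -[Q * (1 - Q)]mul1r; apply: ler_pM; rewrite ?mulr_ge0 //.
  by apply: ler_pM; rewrite ?mulr_ge0.
have -> : Q * (1 - Q) * (Q * (X + S)) =
  (1 - Q) * (Q ^+ 2 * X) + Q * (Q * (1 - Q) * S) by ring.
by apply: lerD; apply: ler_wpM2l; rewrite // ltW.
Qed.

Lemma bernoulli_ineq (F : realFieldType) (r : F) (k : nat) :
  0 <= r -> 1 + k%:R * r <= (1 + r) ^+ k.
Proof.
move=> r_ge0; elim: k => [|k IH]; first by rewrite mul0r addr0 expr0.
rewrite exprS -natr1.
have := ler_wpM2l (_ : 0 <= 1 + r) IH.
have : 0 <= k%:R * r * r by rewrite !mulr_ge0.
nra.
Qed.

Lemma geometric_le0 (F : archiFieldType) (x q K : F) :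
  0 <= q < 1 -> (forall k, x <= q ^+ k * K) -> x <= 0.
Proof.
move=> /andP[q_ge0 q_lt1] x_le; rewrite leNgt; apply/negP => x_gt0.
have [q0|q_neq0] := eqVneq q 0; first by move: (x_le 1%N); rewrite q0 expr1 mul0r; lra.
have q_gt0 : 0 < q by rewrite lt0r q_neq0.
have K_gt0 : 0 < K by move: (x_le 0%N); rewrite expr0 mul1r; lra.
set r := q^-1 - 1.
have r_gt0 : 0 < r by rewrite subr_gt0 invf_gt1.
set k := Num.bound (K / (x * r)).
have k_large : K / (x * r) < k%:R by apply: archi_boundP; rewrite ltW ?divr_gt0 ?mulr_gt0.
have := bernoulli_ineq k (ltW r_gt0).
have -> : 1 + r = q^-1 by rewrite /r; ring.
rewrite exprVn => qk_inv.
have qk_gt0 : 0 < q ^+ k by apply: exprn_gt0.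
have : K < x * (q ^+ k)^-1.
  rewrite ltr_pdivrMr ?mulr_gt0 // in k_large.
  by apply: lt_le_trans (ler_wpM2l (ltW x_gt0) qk_inv); nra.
by rewrite ltr_pdivlMr // mulrC => /lt_le_trans/(_ (x_le k)); rewrite ltxx.
Qed.

Lemma geometric_eq0 (R : realType) (x q K : R[i]) :
  0 <= x -> 0 <= q -> q < 1 -> (forall k, x <= q ^+ k * K) -> x = 0.
Proof.
move=> x_ge0 q_ge0 q_lt1 x_le.
have realC (z : R[i]) : 0 <= z -> z = (complex.Re z)%:C.
  by move=> z_ge0; rewrite [LHS]complexE (ger0_Im z_ge0) mulr0 addr0.
have K_ge0 : 0 <= K by move: (x_le 0%N); rewrite expr0 mul1r; apply: le_trans.
move: x_le; rewrite (realC x) // (realC q) // (realC K) // => x_le.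
apply/eqP; rewrite eq_le (_ : 0 <= _ = true) ?andbT; last by rewrite -realC.
rewrite lecR; apply: (geometric_le0 (q := complex.Re q) (K := complex.Re K)).
  by rewrite -(lecR 0) -(ltcR _ 1) -realC //; apply/andP.
by move=> k; rewrite -lecR rmorphM rmorphXn.
Qed.

(** * Row partial isometries *)

Section RowPartialIsometry.
Variables (R : realType) (d : nat) (H : lmodType R[i]) (ipH : H -> H -> R[i]).
Variables (V : {ffun 'I_d -> H} -> H) (Vadj : H -> {ffun 'I_d -> H}).
Hypothesis ipP : is_inner_product ipH.
Hypothesis rpi : row_partial_isometry ipH V Vadj.

Local Notation tip := (tens_ip ipH (n:=d)).
Let tipP : is_inner_product tip := tens_ip_is_inner_product d ipP.

Lemma V_linear : linear_map V.
Proof. by case: rpi => -[]. Qed.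

Lemma ipVl x h : ipH (V x) h = tip x (Vadj h).
Proof. by case: rpi => _ Vadj_adj _ _; apply: Vadj_adj. Qed.

Lemma ipVr h x : ipH h (V x) = tip (Vadj h) x.
Proof. by rewrite (ipC ipP) ipVl -(ipC tipP). Qed.

Lemma Vadj_linear : linear_map Vadj.
Proof.
move=> a h k; apply: (ip_ext tipP) => x.
by rewrite -ipVl (ipDr ipP) (ipZr ipP) (ipDr tipP) (ipZr tipP) -!ipVl.
Qed.

Lemma VVadjV x : V (Vadj (V x)) = V x.
Proof.
have [_ _ proj _] := rpi.
(* [x - V^* V x] lies in the kernel of the projection [V^* V], hence of [V] *)
set w := x - Vadj (V x).
have Vadj_Vw : Vadj (V w) = 0.
  by rewrite /w (linear_mapB V_linear) (linear_mapB Vadj_linear) proj subrr.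
have /(ip_eq0 ipP) : ipH (V w) (V w) = 0 by rewrite ipVl Vadj_Vw (ip0r tipP).
by rewrite /w (linear_mapB V_linear) => /eqP; rewrite subr_eq0 => /eqP <-.
Qed.

Lemma VadjVVadj h : Vadj (V (Vadj h)) = Vadj h.
Proof.
have [_ _ _ selfadj] := rpi.
by apply: (ip_ext tipP) => x; rewrite -selfadj -ipVl VVadjV ipVl.
Qed.

(* the [x] with [x (x) v] in the closure of [R(V - W)] for all [W] and [v]; by
   the model triple these are exactly the [x] with [x^gamma = 0] *)
Definition common_range (x : H) : Prop :=
  forall n (W : 'I_d -> 'M[R[i]]_n) (v : 'cV[R[i]]_n) (y : {ffun 'I_n -> H}),
    (0 < n)%N -> in_ncball W ->
    orth (tens_ip ipH (n:=n)) (restricted_range V Vadj W) y ->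
    tens_ip ipH (tens x v) y = 0.

Lemma tens_ipE n x (v : 'cV[R[i]]_n) (y : {ffun 'I_n -> H}) :
  tens_ip ipH (tens x v) y = ipH x (\sum_i conjc (v i 0) *: y i).
Proof.
rewrite /tens_ip (ip_sumr ipP); apply: eq_bigr => i _.
by rewrite ffunE (ipZl ipP) (ipZr ipP) conjcK.
Qed.

Lemma tensB n (x x' : H) (v : 'cV[R[i]]_n) : tens (x - x') v = tens x v - tens x' v.
Proof. by apply/ffunP => i; rewrite !ffunE scalerBr. Qed.

Section IsometricInvariantSubspace.
Variable M : H -> Prop.
Hypothesis M_lin : lin_subspace M.
Hypothesis M_inv : forall (j : 'I_d) h, M h -> M (Vadj h j).
Hypothesis M_iso : forall h k, M h -> M k -> tip (Vadj h) (Vadj k) = ipH h k.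

Lemma isometric_VVadj h : M h -> V (Vadj h) = h.
Proof.
move=> Mh; apply/eqP; rewrite eq_sym -subr_eq0; apply/eqP/(ip_eq0 ipP).
have e1 : ipH (V (Vadj h)) h = ipH h h by rewrite ipVl M_iso.
have e2 : ipH h (V (Vadj h)) = ipH h h.
  by rewrite (ipC ipP) e1 (geC0_conj (ip_ge0 ipP h) : conjc _ = _).
have e3 : ipH (V (Vadj h)) (V (Vadj h)) = ipH h h by rewrite ipVl VadjVVadj M_iso.
by rewrite (ipBl ipP) !(ipBr ipP) e1 e2 e3 !subrr.
Qed.

Section Ampliation.
Variables (n : nat) (W : 'I_d -> 'M[R[i]]_n).
Local Notation ZW := (ZVstar Vadj W).
Local Notation tipn := (tens_ip ipH (n:=n)).
Let tipnP : is_inner_product tipn := tens_ip_is_inner_product n ipP.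

Lemma ZVstar_invariant (m : {ffun 'I_n -> H}) : (forall i, M (m i)) -> forall i, M (ZW m i).
Proof.
move=> Mm i; rewrite ffunE; apply: lin_subspace_sum => // j _.
by apply: lin_subspace_sum => // k _; apply/(lin_subspaceZ M_lin)/M_inv.
Qed.

Lemma ZVstar_contraction (c : R[i]) (m : {ffun 'I_n -> H}) :
  row_norm_le W c ->
  (forall i, M (m i)) -> tipn (ZW m) (ZW m) <= c ^+ 2 * tipn m m.
Proof.
move=> W_contr Mm; rewrite /tens_ip; under eq_bigr do rewrite ffunE.
apply: le_trans (row_contraction_ampliation ipP W_contr (fun j k => Vadj (m k) j)) _.
rewrite exchange_big /= le_eqVlt; apply/orP; left; apply/eqP; congr (_ * _).
by apply: eq_bigr => k _; rewrite -M_iso.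
Qed.

Lemma ZVstar_perp_range (y m : {ffun 'I_n -> H}) :
  orth tipn (restricted_range V Vadj W) y -> (forall i, M (m i)) ->
  tipn m y = tipn (ZW m) y.
Proof.
move=> y_perp Mm; apply/eqP; rewrite -subr_eq0 -(ipBl tipnP); apply/eqP/y_perp.
by exists m; split=> // i; exists (Vadj (m i)); rewrite isometric_VVadj.
Qed.

(* [<m, y> = <ZW^k m, y>] for all [k] while [ZW] is a strict contraction on [M] *)
Lemma isometric_invariant_perp_range (y m : {ffun 'I_n -> H}) :
  in_ncball W -> orth tipn (restricted_range V Vadj W) y -> (forall i, M (m i)) ->
  tipn m y = 0.
Proof.
move=> [c [/andP[c_ge0 c_lt1] W_contr]] y_perp Mm.
have iterP k : [/\ forall i, M (iter k ZW m i),
    tipn m y = tipn (iter k ZW m) y &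
    tipn (iter k ZW m) (iter k ZW m) <= (c ^+ 2) ^+ k * tipn m m].
  elim: k => [|k [IH1 IH2 IH3]] /=; first by rewrite expr0 mul1r.
  split; [exact: ZVstar_invariant | by rewrite IH2 ZVstar_perp_range |].
  apply: le_trans (ZVstar_contraction W_contr IH1) _.
  by rewrite [_ ^+ k.+1]exprS -mulrA; apply: ler_wpM2l; rewrite ?exprn_ge0.
set a := tipn m y.
suff : a * conjc a = 0 by move/eqP; rewrite mulf_eq0 conjc_eq0 orbb => /eqP.
apply: (@geometric_eq0 _ _ (c ^+ 2) (tipn m m * tipn y y)).
- exact: mulcJ_ge0.
- exact: exprn_ge0.
- by rewrite expr_lt1.
move=> k; have [_ a_iter iter_le] := iterP k; rewrite /a a_iter.
apply: le_trans (cauchy_schwarz tipnP _ _) _.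
by rewrite mulrA ler_wpM2r ?(ip_ge0 tipnP).
Qed.
End Ampliation.

Lemma isometric_invariant_common_range h : M h -> common_range h.
Proof.
move=> Mh n W v y _ W_ball y_perp.
apply: (isometric_invariant_perp_range W_ball y_perp) => i.
by rewrite ffunE; apply: lin_subspaceZ.
Qed.
End IsometricInvariantSubspace.

Lemma common_range_lin : lin_subspace common_range.
Proof.
split=> [n W v y _ _ _ | a x x' x_cr x'_cr n W v y n_gt0 W_ball y_perp].
  by rewrite tens_ipE (ip0l ipP).
move: (x_cr n W v y n_gt0 W_ball y_perp) (x'_cr n W v y n_gt0 W_ball y_perp).
by rewrite !tens_ipE (ipDl ipP) (ipZl ipP) => -> ->; rewrite mulr0 addr0.
Qed.

Lemma common_range_closed : closed_set ipH common_range.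
Proof.
move=> u x u_cr u_cvg n W v y n_gt0 W_ball y_perp; rewrite tens_ipE.
apply: (ip_annihilator_closed (Y := \sum_i _) ipP _ u_cvg) => k.
by move: (u_cr k n W v y n_gt0 W_ball y_perp); rewrite tens_ipE.
Qed.

Lemma ncball0 n : in_ncball (fun _ : 'I_d => 0 : 'M[R[i]]_n).
Proof.
exists 0; split=> [|x]; first by rewrite lexx ltr01.
rewrite expr0n mul0r /vnsq big1 // => i _.
by rewrite summxE big1 ?normr0 ?expr0n // => j _; rewrite mul0mx mxE.
Qed.

(* at [W = 0] the restricted range is [Ran V (x) C^n] *)
Lemma common_range_isometric x x' :
  common_range x -> common_range x' -> tip (Vadj x) (Vadj x') = ipH x x'.
Proof.
move=> _ x'_cr; rewrite -ipVl; apply/eqP; rewrite -subr_eq0 -(ipBl ipP).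
set r := V (Vadj x) - x.
have Vadj_r : Vadj r = 0.
  by rewrite /r (linear_mapB Vadj_linear) VadjVVadj subrr.
rewrite (ipC ipP) conjc_eq0; apply/eqP.
have := x'_cr 1%N (fun _ => 0) (const_mx 1) [ffun _ => r] isT (ncball0 1).
rewrite tens_ipE big_ord1 mxE conjc1 scale1r ffunE; apply.
move=> _ [z [z_ran ->]].
have -> : ZVstar Vadj (fun _ : 'I_d => 0 : 'M[R[i]]_1) z = 0.
  apply/ffunP => i; rewrite !ffunE big1 // => j _; rewrite big1 // => k _.
  by rewrite mxE scale0r.
rewrite subr0 /tens_ip big1 // => i _.
by have [w ->] := z_ran i; rewrite ffunE ipVl Vadj_r (ip0r tipP).
Qed.

Section Border.
Variables (n : nat) (W : 'I_d -> 'M[R[i]]_n) (v : 'cV[R[i]]_n) (j0 : 'I_d) (del : R[i]).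

Definition border_mx (i : 'I_d) : 'M[R[i]]_(n + 1) :=
  block_mx (W i) ((i == j0)%:R * del *: v) 0 0.

Lemma border_mx_mul i (X : 'cV[R[i]]_(n + 1)) :
  border_mx i *m X =
  col_mx (W i *m usubmx X + ((i == j0)%:R * del * dsubmx X 0 0) *: v) 0.
Proof.
rewrite -{1}(vsubmxK X) mul_block_col !mul0mx addr0 {1}[dsubmx X]mx11_scalar.
by rewrite mul_mx_scalar scalerA mulrC.
Qed.

Lemma border_mx_row_norm (c Q : R[i]) :
  0 <= c -> c <= Q -> 0 < Q -> Q < 1 ->
  row_norm_le W c ->
  0 <= del -> del <= 1 -> del * (1 + vnsq v) = Q * (1 - Q) ->
  forall X : 'I_d -> 'cV[R[i]]_(n + 1),
    vnsq (\sum_(j < d) border_mx j *m X j) <= Q * \sum_(j < d) vnsq (X j).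
Proof.
move=> c_ge0 cQ Q_gt0 Q_lt1 W_contr del_ge0 del_le1 del_def X.
set s := dsubmx (X j0) 0 0; set a := \sum_j W j *m usubmx (X j).
have -> : \sum_j border_mx j *m X j = col_mx (a + (del * s) *: v) 0.
  rewrite -[LHS]vsubmxK; congr col_mx; rewrite raddf_sum /=; last first.
    by apply: big1 => j _; rewrite border_mx_mul col_mxKd.
  under eq_bigr do rewrite border_mx_mul col_mxKu.
  rewrite big_split /= [X in _ + X](bigD1 j0) //= eqxx mul1r.
  by rewrite [X in _ + (_ + X)]big1 ?addr0 // => j /negbTE ->; rewrite !mul0r scale0r.
have -> : \sum_j vnsq (X j) = \sum_j vnsq (usubmx (X j)) + \sum_j vnsq (dsubmx (X j)).
  by rewrite -big_split /=; apply: eq_bigr => j _; rewrite -vnsq_col_mx vsubmxK.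
rewrite vnsq_col_mx vnsq0 addr0.
apply: (border_bound (s := `|s| ^+ 2) c_ge0 cQ Q_gt0 Q_lt1 _ (vnsq_ge0 v) _ _
  del_ge0 del_le1 del_def).
- by apply: sumr_ge0 => j _; apply: vnsq_ge0.
- exact: exprn_ge0.
- rewrite (bigD1 j0) //= {1}/vnsq big_ord1 -/s lerDl.
  by apply: sumr_ge0 => j _; apply: vnsq_ge0.
apply: le_trans (vnsqD_weighted _ _ (ltW Q_gt0)) _.
rewrite vnsqZ normrM (ger0_norm del_ge0) exprMn.
by apply: lerD => //; apply: ler_wpM2l; [rewrite subr_ge0 ltW | apply: W_contr].
Qed.

Variable y : {ffun 'I_n -> H}.

(* chosen so that [<z, border_tail> = del <V_j0^* z (x) v, y>] (see [ip_border_tail]),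
   which makes [border_vec] orthogonal to the bordered restricted range *)
Definition border_tail : H :=
  V [ffun i => (i == j0)%:R *: \sum_k conjc (del * v k 0) *: y k].

Definition border_vec : {ffun 'I_(n + 1) -> H} :=
  [ffun p => if split p is inl k then y k else border_tail].

Lemma border_vec_lshift k : border_vec (lshift 1 k) = y k.
Proof. by rewrite ffunE (unsplitK (inl k : 'I_n + 'I_1)). Qed.

Lemma border_vec_rshift : border_vec (rshift n ord0) = border_tail.
Proof. by rewrite ffunE (unsplitK (inr ord0 : 'I_n + 'I_1)). Qed.

Lemma ip_border_tail z :
  ipH z border_tail = del * \sum_k v k 0 * ipH (Vadj z j0) (y k).
Proof.
rewrite ipVr /tens_ip (bigD1 j0) //= [X in _ + X]big1 ?addr0; last first.
  by move=> i /negbTE ij; rewrite ffunE ij scale0r (ip0r ipP).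
rewrite ffunE eqxx scale1r (ip_sumr ipP) mulr_sumr; apply: eq_bigr => k _.
by rewrite (ipZr ipP) conjcK mulrA.
Qed.

Lemma ZVstar_border_lshift (x : {ffun 'I_(n + 1) -> H}) k :
  ZVstar Vadj border_mx x (lshift 1 k) =
  ZVstar Vadj W [ffun k => x (lshift 1 k)] k + (del * v k 0) *: Vadj (x (rshift n ord0)) j0.
Proof.
rewrite !ffunE /border_mx.
under eq_bigr => i _ do rewrite big_split_ord /= big_ord1 block_mxEur mxE.
rewrite big_split /=; congr (_ + _).
  by apply: eq_bigr => i _; apply: eq_bigr => q _; rewrite block_mxEul ffunE.
rewrite (bigD1 j0) //= eqxx mul1r big1 ?addr0 // => i /negbTE ->.
by rewrite !mul0r scale0r.
Qed.

Lemma ZVstar_border_rshift (x : {ffun 'I_(n + 1) -> H}) :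
  ZVstar Vadj border_mx x (rshift n ord0) = 0.
Proof.
rewrite ffunE big1 // => i _; rewrite big1 // => q _.
by rewrite /border_mx block_mxEv col_mxEd row_mx0 mxE scale0r.
Qed.

Lemma border_vec_perp :
  orth (tens_ip ipH (n:=n)) (restricted_range V Vadj W) y ->
  orth (tens_ip ipH (n:=n + 1)) (restricted_range V Vadj border_mx) border_vec.
Proof.
move=> y_perp _ [x [x_ran ->]].
set xu : {ffun 'I_n -> H} := [ffun k => x (lshift 1 k)].
set xl := x (rshift n ord0).
have /y_perp : restricted_range V Vadj W (xu - ZVstar Vadj W xu).
  by exists xu; split=> // k; rewrite ffunE; apply: x_ran.
rewrite /tens_ip big_split_ord /= big_ord1 ffunBE ZVstar_border_rshift subr0 -/xl.
rewrite border_vec_rshift ip_border_tail => xu_perp.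
have -> : \sum_k ipH ((x - ZVstar Vadj border_mx x) (lshift 1 k))
                     (border_vec (lshift 1 k)) =
    \sum_k (ipH ((xu - ZVstar Vadj W xu) k) (y k) - del * v k 0 * ipH (Vadj xl j0) (y k)).
  apply: eq_bigr => k _; rewrite !ffunBE ZVstar_border_lshift border_vec_lshift -/xu -/xl.
  by rewrite opprD addrA (ipBl ipP) (ipZl ipP) [xu k]ffunE.
rewrite sumrB xu_perp sub0r mulr_sumr.
by under [X in _ + X]eq_bigr do rewrite mulrA; rewrite addNr.
Qed.

Lemma border_vec_tens_ip x :
  tens_ip ipH (tens x (col_mx 0 1)) border_vec = del * tens_ip ipH (tens (Vadj x j0) v) y.
Proof.
rewrite /tens_ip big_split_ord /= big_ord1 big1 ?add0r; last first.
  by move=> k _; rewrite ffunE col_mxEu mxE scale0r (ip0l ipP).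
rewrite ffunE col_mxEd mxE eqxx mulr1n scale1r border_vec_rshift ip_border_tail.
by congr (_ * _); apply: eq_bigr => k _; rewrite ffunE (ipZl ipP).
Qed.
End Border.

Lemma border_mx_ncball n (W : 'I_d -> 'M[R[i]]_n) (v : 'cV[R[i]]_n) (j0 : 'I_d) :
  in_ncball W -> exists2 del : R[i], 0 < del & in_ncball (border_mx W v j0 del).
Proof.
move=> [c [/andP[c_ge0 c_lt1] W_contr]].
set Q := (1 + c) / 2; set K := vnsq v.
have Q_gt0 : 0 < Q by rewrite divr_gt0 // ltr_wpDr.
have Q_lt1 : Q < 1 by rewrite ltr_pdivrMr // mul1r ltrD2l.
have cQ : c <= Q by rewrite ler_pdivlMr // mulr_natr mulr2n lerD2r ltW.
have K1_gt0 : 0 < 1 + K by rewrite ltr_wpDr // vnsq_ge0.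
have QQ_gt0 : 0 < Q * (1 - Q) by rewrite mulr_gt0 // subr_gt0.
have QQ_le1 : Q * (1 - Q) <= 1.
  apply: mulr_ile1; [exact: ltW | by rewrite subr_ge0 ltW | exact: ltW |].
  by rewrite lerBlDr lerDl ltW.
exists (Q * (1 - Q) / (1 + K)); first exact: divr_gt0.
exists (sqrtC Q); split.
  by rewrite sqrtC_ge0 ltW //= -sqrtC1 ltr_sqrtC ?nnegrE ?ler01 ?ltW.
rewrite sqrtCK; apply: (border_mx_row_norm j0 c_ge0 cQ Q_gt0 Q_lt1 W_contr).
- by rewrite divr_ge0 ?ltW.
- by rewrite ler_pdivrMr // mul1r (le_trans QQ_le1) // lerDl vnsq_ge0.
- by rewrite divfK // gt_eqF.
Qed.

Lemma common_range_invariant j x : common_range x -> common_range (Vadj x j).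
Proof.
move=> x_cr n W v y _ W_ball y_perp.
have [del del_gt0 border_ball] := border_mx_ncball v j W_ball.
have n1_gt0 : (0 < n + 1)%N by rewrite addn1.
have := x_cr _ _ (col_mx 0 1) _ n1_gt0 border_ball (border_vec_perp y_perp).
by rewrite border_vec_tens_ip => /eqP; rewrite mulf_eq0 gt_eqF //= => /eqP.
Qed.
End RowPartialIsometry.

(** * The model triple *)

Section ModelTriple.
Variables (R : realType) (d : nat) (H : lmodType R[i]) (ipH : H -> H -> R[i]).
Variables (V : {ffun 'I_d -> H} -> H) (Vadj : H -> {ffun 'I_d -> H}).
Variables (Jinf J0 : lmodType R[i]) (ipinf : Jinf -> Jinf -> R[i]) (ip0 : J0 -> J0 -> R[i]).
Variable ginf : Jinf -> {ffun 'I_d -> H}.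
Variable g : forall n, ('I_d -> 'M[R[i]]_n) -> {ffun 'I_n -> J0} -> {ffun 'I_n -> H}.
Variable gadj : forall n, ('I_d -> 'M[R[i]]_n) -> {ffun 'I_n -> H} -> {ffun 'I_n -> J0}.
Hypothesis ipP : is_inner_product ipH.
Hypothesis model : model_triple ipH V Vadj ipinf ip0 ginf g gadj.

(* [gamma(W)] maps onto [R(V - W)^perp], so [gamma(W)^*] sees exactly that part *)
Lemma gadj_eqP n (W : 'I_d -> 'M[R[i]]_n) (x x' : {ffun 'I_n -> H}) :
  (0 < n)%N -> in_ncball W ->
  gadj W x = gadj W x' <->
  (forall y, orth (tens_ip ipH (n:=n)) (restricted_range V Vadj W) y ->
     tens_ip ipH x y = tens_ip ipH x' y).
Proof.
move=> n_gt0 W_ball.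
have [[_ [ip0P _]] _ _ /(_ n W n_gt0 W_ball) [_ g_adj _ g_range] _] := model.
have tipP := tens_ip_is_inner_product n ipP.
split=> [x_eq y /g_range [j <-] | x_eq].
  by rewrite (ipC tipP) [RHS](ipC tipP) !g_adj x_eq.
apply: (ip_ext (tens_ip_is_inner_product n ip0P)) => j.
by rewrite -!g_adj (ipC tipP) [RHS](ipC tipP) x_eq //; apply/g_range; exists j.
Qed.

Lemma hgamma_eqP h k : hgamma_eq gadj h k <-> common_range ipH V Vadj (h - k).
Proof.
have tipP n := tens_ip_is_inner_product n ipP.
split=> [hk n W v y n_gt0 W_ball y_perp | hk n W n_gt0 W_ball v].
  rewrite tensB (ipBl (tipP n)); apply/eqP; rewrite subr_eq0; apply/eqP.
  by apply: (gadj_eqP _ _ n_gt0 W_ball).1 y_perp; apply: hk.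
apply/(gadj_eqP _ _ n_gt0 W_ball) => y y_perp; apply/eqP; rewrite -subr_eq0.
by rewrite -(ipBl (tipP n)) -tensB (hk n W v y).
Qed.
End ModelTriple.

Unset Implicit Arguments.

Theorem mainTheorem9 (R : realType) (d : nat)
  (H : lmodType R[i]) (ipH : H -> H -> R[i])
  (V : {ffun 'I_d -> H} -> H) (Vadj : H -> {ffun 'I_d -> H})
  (Jinf J0 : lmodType R[i]) (ipinf : Jinf -> Jinf -> R[i]) (ip0 : J0 -> J0 -> R[i])
  (ginf : Jinf -> {ffun 'I_d -> H})
  (g : forall n : nat, ('I_d -> 'M[R[i]]_n) -> {ffun 'I_n -> J0} -> {ffun 'I_n -> H})
  (gadj : forall n : nat, ('I_d -> 'M[R[i]]_n) -> {ffun 'I_n -> H} -> {ffun 'I_n -> J0}) :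
  is_hilbert ipH ->
  row_partial_isometry ipH V Vadj ->
  model_triple ipH V Vadj ipinf ip0 ginf g gadj ->
  (Ugamma_injective gadj <-> CNC ipH Vadj) /\
  (CNC ipH Vadj ->
     (* <h^gamma, k^gamma> := <h, k> is well defined on H^gamma *)
     forall h h' k k' : H,
       hgamma_eq gadj h h' -> hgamma_eq gadj k k' -> ipH h k = ipH h' k').
Proof.
move=> [ipP _] rpi model.
have Ugamma_inj : CNC ipH Vadj -> Ugamma_injective gadj.
  move=> cnc h k /(hgamma_eqP ipP model) hk; apply/eqP; rewrite -subr_eq0; apply/eqP.
  apply: (cnc (common_range ipH V Vadj)) hk.
  - exact: common_range_lin.
  - exact: common_range_closed.
  - exact: common_range_invariant.
  - exact: common_range_isometric.
split; last by move=> cnc h h' k k' /(Ugamma_inj cnc) <- /(Ugamma_inj cnc) <-.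
split; last exact: Ugamma_inj.
move=> Uinj M M_lin _ M_inv M_iso h Mh.
apply/Uinj/(hgamma_eqP ipP model); rewrite subr0.
exact: (isometric_invariant_common_range ipP rpi M_lin M_inv M_iso).
Qed.
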